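(* For every finite simple digraph $G$, ${\sf dgw}(G) \leq {\sf circ}(G) + 1$, where ${\sf dgw}(G)$ is the DAG-width of $G$ and ${\sf circ}(G)$ is its circumference.
   Context: All digraphs are finite and simple (no loops, no multiple arcs). The circumference ${\sf circ}(G)$ of a digraph $G$ is the length (number of arcs) of a longest simple directed cycle in $G$; if $G$ is acyclic (a DAG), ${\sf circ}(G)$ is defined to be $1$. For a DAG $T$ and distinct nodes $i,j$, write $i\prec j$ if there is a directed walk in $T$ from $i$ to $j$, and $i\preceq j$ if $i=j$ or $i\prec j$; a root is a node with no incoming arcs. Given sets $X_i$ for nodes $i$, let $X_{\succeq j}=\bigcup_{k\succeq j}X_k$. For $W,X\subseteq V(G)$, $X$ guards $W$ if $W\cap X=\emptyset$ and for every arc $(u,v)$ of $G$ with $u\in W$ we have $v\in W\cup X$. A DAG-decomposition of $G$ is a pair $(T,(X_i)_{i\in V(T)})$ where $T$ is a DAG and each $X_i\subseteq V(G)$, such that: (1) $\bigcup_{i}X_i=V(G)$; (2) for all nodes $i,j,k$ of $T$ with $i\preceq j\preceq k$, $X_i\cap X_k\subseteq X_j$; (3) for every arc $(i,j)$ of $T$, $X_i\cap X_j$ guards $X_{\succeq j}\setminus X_i$, and for every root $r$ of $T$, $X_{\succeq r}$ is guarded by $\emptyset$. Its width is $\max_i |X_i|$, and the DAG-width ${\sf dgw}(G)$ is the minimum width of a DAG-decomposition of $G$. *)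

From mathcomp Require Import all_boot.
Set Implicit Arguments. Unset Strict Implicit. Unset Printing Implicit Defensive.

(* A finite simple digraph: vertex type V : finType, arc relation e : rel V
   (at most one arc per ordered pair), with no loops. *)
Definition simple_digraph (V : finType) (e : rel V) : Prop := irreflexive e.

(* There is a simple directed cycle with exactly n arcs (n >= 1):
   n pairwise distinct vertices c_0,...,c_{n-1} with arcs c_i -> c_{i+1 mod n}. *)
Definition has_cycle_of_length (V : finType) (e : rel V) (n : nat) : bool :=
  (0 < n) && [exists c : n.-tuple V, uniq c && cycle e c].

(* circumference: length of a longest simple directed cycle, 1 if acyclic
   (simple cycles have at most #|V| arcs, and at least 2 in a loopless digraph) *)
Definition circ (V : finType) (e : rel V) : nat :=
  maxn 1 (\max_(n < #|V|.+1 | has_cycle_of_length e n) n).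

Definition is_dag (I : finType) (t : rel I) : Prop :=
  forall i j, t i j -> ~~ connect t j i.

Definition preceq (I : finType) (t : rel I) (i j : I) : bool := connect t i j.

Definition Xsucc (I V : finType) (t : rel I) (X : I -> {set V}) (j : I) : {set V} :=
  \bigcup_(k | preceq t j k) X k.

Definition guards (V : finType) (e : rel V) (W X : {set V}) : Prop :=
  [disjoint W & X] /\ (forall u v, u \in W -> e u v -> v \in W :|: X).

Definition is_root (I : finType) (t : rel I) (r : I) : Prop := forall i, ~~ t i r.

Definition is_dag_decomposition (V : finType) (e : rel V)
    (I : finType) (t : rel I) (X : I -> {set V}) : Prop :=
  [/\ is_dag t,
      \bigcup_(i : I) X i = [set: V],
      (forall i j k, preceq t i j -> preceq t j k -> X i :&: X k \subset X j),
      (forall i j, t i j -> guards e (Xsucc t X j :\: X i) (X i :&: X j)) &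
      (forall r, is_root t r -> guards e (Xsucc t X r) set0)].

Definition dec_width (I V : finType) (X : I -> {set V}) : nat := \max_(i : I) #|X i|.

(* dgw(G) <= k  iff  G has a DAG-decomposition of width at most k
   (dgw is the minimum width over all DAG-decompositions). *)
Definition dgw_le (V : finType) (e : rel V) (k : nat) : Prop :=
  exists (I : finType) (t : rel I) (X : I -> {set V}),
    is_dag_decomposition e t X /\ dec_width X <= k.

From mathcomp Require Import all_boot zify.
Set Implicit Arguments. Unset Strict Implicit. Unset Printing Implicit Defensive.

(* Fix a depth-first search forest of G. For a vertex y let reach y be the set
   of vertices reachable from y without entering a proper DFS-ancestor of y, and
   exits y the out-neighbours of reach y outside it. The relation "z lies in
   reach y" is a partial order; its Hasse diagram, with bags {y} ∪ exits y, is a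
   DAG-decomposition, because the union of the bags below y is
   reach y ∪ exits y and the guarding conditions become closure properties of
   reach. Every exit of y is a DFS-ancestor of y, so the tree path from the
   topmost exit down to y, a path back inside reach y and the arc into that exit
   form a simple cycle through the whole bag of y: bags have at most circ G
   vertices. *)

Lemma connect_stable (T : finType) (r : rel T) (P : pred T) x y :
  P x -> (forall a b, P a -> r a b -> P b) -> connect r x y -> P y.
Proof.
move=> Px Pr /connectP [p + ->]; elim: p x Px => //= b p IHp x Px /andP [rxb].
exact: IHp (Pr _ _ Px rxb).
Qed.

(** * Hasse diagrams of finite orders *)

Section HasseDiagram.
Variables (T : finType) (le : rel T).
Hypotheses (le_refl : reflexive le) (le_trans : transitive le)
  (le_anti : antisymmetric le).

Definition hasse : rel T :=
  [rel x y | [&& x != y, le x y &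
     [forall z, ~~ [&& z != x, z != y, le x z & le z y]]]].

Lemma connect_hasse : connect hasse =2 le.
Proof.
move=> x y; apply/idP/idP.
  by apply: connect_stable (le_refl x) _ => a b xa /and3P [_ ab _]; exact: le_trans ab.
suff IH n : forall x y, #|[set z | le x z && le z y]| <= n -> le x y ->
    connect hasse x y by exact: IH.
elim: n => [|n IHn] {}x {}y; set I := [set z | _] => cardI lexy.
  have : x \in I by rewrite inE le_refl.
  by move: cardI; rewrite leqn0 => /eqP/cards0_eq ->; rewrite inE.
have [-> | nxy] := eqVneq x y; first exact: connect0.
have [minimal | /forallPn [z]] := boolP [forall z, ~~ [&& z != x, z != y, le x z & le z y]].
  by apply: connect1; rewrite /hasse /= nxy lexy.
rewrite negbK => /and4P [zx zy lexz lezy].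
have smaller (A : {set T}) : A \proper I -> #|A| <= n.
  by move=> AI; rewrite -ltnS (leq_trans (proper_card AI) cardI).
have strict w : w != x -> w != y -> w \in I ->
    #|[set v | le w v && le v y]| <= n /\ #|[set v | le x v && le v w]| <= n.
  move=> wx wy; rewrite inE => /andP [lexw lewy].
  split; apply: smaller; apply/properP; split.
  - by apply/subsetP => v; rewrite !inE => /andP [/(le_trans lexw) -> ->].
  - exists x; rewrite !inE ?(le_refl x) ?lexy //=.
    by apply: contra wx => /andP [lewx _]; apply/eqP/le_anti; rewrite lewx lexw.
  - by apply/subsetP => v; rewrite !inE => /andP [-> /le_trans ->].
  - exists y; rewrite !inE ?(le_refl y) ?lexy //=.
    by apply: contra wy => leyw; apply/eqP/le_anti; rewrite lewy leyw.
have zI : z \in I by rewrite inE lexz lezy.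
have [czy cxz] := strict z zx zy zI.
by apply: (@connect_trans _ _ z); [exact: IHn cxz lexz | exact: IHn czy lezy].
Qed.

Lemma hasse_dag : is_dag hasse.
Proof.
move=> i j /and3P [nij leij _]; rewrite connect_hasse.
by apply: contra nij => leji; apply/eqP/le_anti; rewrite leij.
Qed.

Lemma hasse_root_minimal r x : is_root hasse r -> le x r -> x = r.
Proof.
move=> root; rewrite -connect_hasse => /connectP [p].
case/lastP: p => [_ -> // | p z]; rewrite last_rcons rcons_path => /andP [_ cov] rz.
by move: (root (last x p)); rewrite rz cov.
Qed.

End HasseDiagram.

Lemma circ_gt0 (V : finType) (e : rel V) : 0 < circ e.
Proof. exact: leq_maxl. Qed.

Lemma size_cycle_le_circ (V : finType) (e : rel V) (c : seq V) :
  uniq c -> cycle e c -> size c <= circ e.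
Proof.
case: c => [|x s] uc cc; first exact: ltnW (circ_gt0 e).
have lt_c : size (x :: s) < #|V|.+1 by rewrite ltnS -(card_uniqP uc) max_card.
have cyc : has_cycle_of_length e (Ordinal lt_c).
  by apply/andP; split => //; apply/existsP; exists (in_tuple (x :: s)); rewrite uc cc.
apply: leq_trans (leq_maxr 1 _).
exact: (@leq_bigmax_cond _ (fun n : 'I_#|V|.+1 => has_cycle_of_length e n) val _ cyc).
Qed.

(** * Depth-first search forests *)

Section DepthFirstSearch.
Variables (V : finType) (e : rel V).

Definition arc_into (U : {set V}) : rel V := [rel a b | (b \in U) && e a b].

Definition extends (pi : seq V) (p : V) := (pi == [::]) || e (last p pi) p.

Definition reach_in (U : {set V}) (u : V) := [set x in U | connect (arc_into U) u x].

(* [U] is the set of unvisited vertices and [pi] the stack of a depth-first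
   search: every unvisited vertex can still be reached inside [U] from a vertex
   that may be pushed on [pi]. *)
Definition dfs_state (U : {set V}) (pi : seq V) : Prop :=
  [/\ forall x, x \in U -> x \notin pi, uniq pi, sorted e pi &
      forall x, x \in U ->
        exists2 p, (p \in U) && extends pi p & connect (arc_into U) p x].

(* A depth-first search of [U] started on the stack [pi], numbering vertices in
   preorder from [o]: [ap y] is the stack when [y] is entered (its ancestors,
   root first), [pre y] its preorder number and [sz y] the size of its subtree.
   [dfs_arc] is what distinguishes depth-first search: an arc towards a vertex
   discovered later leads into the subtree of its tail. *)
Record dfs_forest (U : {set V}) (pi : seq V) (o : nat)
    (ap : V -> seq V) (pre sz : V -> nat) : Prop := DfsForest {
  dfs_stack y : y \in U -> exists2 s, ap y = pi ++ s & {subset s <= U};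
  dfs_uniq y : y \in U -> uniq (rcons (ap y) y);
  dfs_sorted y : y \in U -> sorted e (rcons (ap y) y);
  dfs_ap_take y a : y \in U -> a \in U -> a \in ap y ->
    ap a = take (index a (ap y)) (ap y);
  dfs_interval x y : x \in U -> y \in U ->
    ((y == x) || (x \in ap y)) = (pre x <= pre y < pre x + sz x);
  dfs_pre_ge x : x \in U -> o <= pre x;
  dfs_end_le x : x \in U -> pre x + sz x <= o + #|U|;
  dfs_arc x y : x \in U -> y \in U -> e x y -> pre x < pre y -> x \in ap y }.

Lemma dfs_forest0 pi o ap pre sz : dfs_forest set0 pi o ap pre sz.
Proof. by split=> ?; rewrite inE. Qed.

Lemma dfs_sz_gt0 U pi o ap pre sz x :
  dfs_forest U pi o ap pre sz -> x \in U -> 0 < sz x.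
Proof.
move=> F xU; have := dfs_interval F xU xU.
by rewrite eqxx leqnn /= -{1}[pre x]addn0 ltn_add2l.
Qed.

Lemma extends_sorted pi p : sorted e pi -> extends pi p -> sorted e (rcons pi p).
Proof. by case: pi => //= h t pth /orP [// | ep]; rewrite rcons_path pth. Qed.

Lemma path_arc_into (U W : {set V}) x p :
  path (arc_into U) x p -> {subset p <= W} -> path (arc_into W) x p.
Proof.
elim: p x => //= b p IHp x /andP [/andP [_ exb] pth] pW.
have bW : b \in W by apply: pW; exact: mem_head.
rewrite /arc_into /= bW exb /=; apply: IHp pth _ => z zp.
by apply: pW; rewrite in_cons zp orbT.
Qed.

Section Step.
Variables (U : {set V}) (pi : seq V) (u : V).
Hypotheses (state : dfs_state U pi) (uU : u \in U) (pi_u : extends pi u).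

Let S := reach_in U u.
Let S' := S :\ u.
Let R := U :\: S.

Lemma reach_in_sub : {subset S <= U}.
Proof. by move=> x; rewrite inE => /andP []. Qed.

Lemma reach_in_closed a b : a \in S -> arc_into U a b -> b \in S.
Proof.
rewrite !inE => /andP [_ ua] /[dup] /andP [-> _] ab /=.
exact: connect_trans ua (connect1 ab).
Qed.

Lemma reach_in_self : u \in S.
Proof. by rewrite inE uU connect0. Qed.

Lemma u_notin_pi : u \notin pi.
Proof. by case: state => + _ _ _; apply. Qed.

Lemma step_cases y : y \in U -> [\/ y = u, y \in S' | y \in R].
Proof.
move=> yU; have [-> | yu] := eqVneq y u; first by constructor 1.
case yS: (y \in S); first by constructor 2; rewrite in_setD1 yu.
by constructor 3; rewrite in_setD yS.
Qed.

Lemma connect_reach_in z : connect (arc_into U) u z -> z \in S.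
Proof. exact: connect_stable reach_in_self reach_in_closed. Qed.

Lemma dfs_state_subtree : dfs_state S' (rcons pi u).
Proof.
case: state => Upi upi spi _; split.
- move=> x /setD1P [xu /reach_in_sub /Upi]; rewrite mem_rcons in_cons.
  by rewrite (negbTE xu).
- by rewrite rcons_uniq u_notin_pi.
- exact: extends_sorted.
move=> x /setD1P [xu xS].
have [p0 pth0 xE] : exists2 p0, path (arc_into U) u p0 & x = last u p0.
  by apply/connectP; move: xS; rewrite inE => /andP [].
move: xu; rewrite {}xE; case/shortenP: pth0 => -[|q r] pth up _ /=.
  by rewrite eqxx.
move=> _; have in_S' z : z \in q :: r -> z \in S'.
  move=> zqr; apply/setD1P; split.
    by apply: contraTneq zqr => ->; move: up => /andP [].
  by apply: connect_reach_in (path_connect pth _); rewrite in_cons zqr orbT.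
have euq : e u q by case/andP: pth => /andP [].
exists q; first by rewrite in_S' ?mem_head //= /extends last_rcons euq orbT.
apply/connectP; exists r => //; case/andP: pth => _ pth.
by apply: path_arc_into pth _ => z zr; apply: in_S'; rewrite in_cons zr orbT.
Qed.

Lemma path_leaving_reach_in x q : x \in U -> path (arc_into U) x q ->
  last x q \notin S -> (x \in R) && path (arc_into R) x q.
Proof.
elim: q x => [|b q IHq] x xU /=; first by rewrite in_setD xU andbT => _ ->.
case/andP=> /[dup] xb /andP [bU _] pth /(IHq b bU pth) /andP [bR pthR].
rewrite pthR /arc_into /= bR andbT; case/andP: (xb) => _ -> /=.
rewrite in_setD xU !andbT; apply/negP => xS.
by rewrite in_setD (reach_in_closed xS xb) in bR.
Qed.

Lemma dfs_state_rest : dfs_state R pi.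
Proof.
case: state => Upi upi spi reachU; split => //.
  by move=> x /setDP [/Upi].
move=> x /setDP [xU xS]; have [p /andP [pU pi_p] /connectP [q pth xE]] := reachU x xU.
move: xS; rewrite xE => /(path_leaving_reach_in pU pth) /andP [pR pthR].
by exists p; [rewrite pR | apply/connectP; exists q].
Qed.

(* Entering [u]: [A] searches below [u] the other vertices reachable from [u],
   [B] the vertices left unvisited. *)
Variables (o : nat) (apA apB : V -> seq V) (preA szA preB szB : V -> nat).
Hypotheses (A : dfs_forest S' (rcons pi u) o.+1 apA preA szA)
           (B : dfs_forest R pi (o + #|S|) apB preB szB).

Definition glue T (tu : T) (fA fB : V -> T) x :=
  if x == u then tu else if x \in S then fA x else fB x.

Local Notation ap := (glue pi apA apB).
Local Notation pre := (glue o preA preB).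
Local Notation sz := (glue #|S| szA szB).

Lemma glue_u T (tu : T) fA fB : glue tu fA fB u = tu.
Proof. by rewrite /glue eqxx. Qed.

Lemma glue_A T (tu : T) fA fB x : x \in S' -> glue tu fA fB x = fA x.
Proof. by case/setD1P => /negbTE xu xS; rewrite /glue xu xS. Qed.

Lemma glue_B T (tu : T) fA fB x : x \in R -> glue tu fA fB x = fB x.
Proof.
case/setDP => _ /negbTE xS; rewrite /glue xS; case: eqP => // xu.
by rewrite xu reach_in_self in xS.
Qed.

Lemma card_reach_in : #|S| = #|S'|.+1.
Proof. by rewrite (cardsD1 u S) reach_in_self. Qed.

Lemma card_step : #|U| = #|S| + #|R|.
Proof.
have SU : S \subset U by apply/subsetP; exact: reach_in_sub.
by rewrite -(cardsID S U) (setIidPr SU).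
Qed.

Lemma ap_subtree y : y \in S' -> exists2 s, apA y = pi ++ u :: s & {subset s <= S'}.
Proof. by move=> /(dfs_stack A) [s ->] sS; exists s; rewrite // cat_rcons. Qed.

Lemma range_subtree x : x \in S' -> o < preA x /\ preA x + szA x <= o + #|S|.
Proof.
move=> xS; have := dfs_end_le A xS; have := dfs_pre_ge A xS.
by rewrite card_reach_in; lia.
Qed.

Lemma range_rest x : x \in R -> o + #|S| <= preB x /\ preB x + szB x <= o + #|U|.
Proof.
move=> xR; have := dfs_end_le B xR; have := dfs_pre_ge B xR.
by rewrite card_step; lia.
Qed.

Lemma glue_stack y : y \in U -> exists2 s, ap y = pi ++ s & {subset s <= U}.
Proof.
case/step_cases => [-> | yS | yR].
- by exists [::]; rewrite ?glue_u ?cats0.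
- have [s As sS] := ap_subtree yS; exists (u :: s); first by rewrite glue_A.
  move=> z; rewrite in_cons => /predU1P [-> // | /sS /setD1P [_]].
  exact: reach_in_sub.
- have [s Bs sR] := dfs_stack B yR; exists s; first by rewrite glue_B.
  by move=> z /sR /setDP [].
Qed.

Lemma glue_uniq y : y \in U -> uniq (rcons (ap y) y).
Proof.
case/step_cases => [-> | yS | yR]; last by rewrite glue_B //; exact: (dfs_uniq B).
  by case: state => _ upi _ _; rewrite glue_u rcons_uniq u_notin_pi.
by rewrite glue_A //; exact: (dfs_uniq A).
Qed.

Lemma glue_sorted y : y \in U -> sorted e (rcons (ap y) y).
Proof.
case/step_cases => [-> | yS | yR]; last by rewrite glue_B //; exact: (dfs_sorted B).
  by case: state => _ _ spi _; rewrite glue_u extends_sorted.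
by rewrite glue_A //; exact: (dfs_sorted A).
Qed.

Lemma glue_mem_ap y z : y \in U -> z \in U -> z \in ap y ->
  (y \in S') && ((z == u) || (z \in S')) || (y \in R) && (z \in R).
Proof.
case: state => Upi _ _ _; move=> + zU; case/step_cases => [-> | yS | yR].
- by rewrite glue_u (negbTE (Upi z zU)).
- rewrite glue_A // yS; have [s -> sS] := ap_subtree yS; rewrite mem_cat (negbTE (Upi z zU)).
  by rewrite in_cons => /predU1P [-> | /sS ->]; rewrite ?eqxx ?orbT.
- rewrite glue_B // yR; have [s -> sR] := dfs_stack B yR; rewrite mem_cat (negbTE (Upi z zU)).
  by move=> /sR ->; rewrite orbT.
Qed.

Lemma glue_ap_take y a : y \in U -> a \in U -> a \in ap y ->
  ap a = take (index a (ap y)) (ap y).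
Proof.
move=> yU aU aay; case/orP: (glue_mem_ap yU aU aay) => /andP [yS].
  case/predU1P => [aE | aS]; last by move: aay; rewrite !glue_A //; exact: (dfs_ap_take A).
  rewrite aE glue_u glue_A //; have [s -> _] := ap_subtree yS.
  by rewrite index_cat (negbTE u_notin_pi) /= eqxx addn0 take_size_cat.
by move=> aR; move: aay; rewrite !glue_B //; exact: (dfs_ap_take B).
Qed.

Lemma glue_sz_gt0 x : x \in U -> 0 < sz x.
Proof.
case/step_cases => [-> | xS | xR]; first by rewrite glue_u card_reach_in.
  by rewrite glue_A //; exact: dfs_sz_gt0 A xS.
by rewrite glue_B //; exact: dfs_sz_gt0 B xR.
Qed.

Lemma glue_pre_ge x : x \in U -> o <= pre x.
Proof.
case/step_cases => [-> | xS | xR]; first by rewrite glue_u.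
  by rewrite glue_A //; have [] := range_subtree xS; lia.
by rewrite glue_B //; have [] := range_rest xR; lia.
Qed.

Lemma glue_end_le x : x \in U -> pre x + sz x <= o + #|U|.
Proof.
move=> xU; have := card_step; case: (step_cases xU) => [-> | xS | xR].
- by rewrite !glue_u; lia.
- by rewrite !glue_A //; have [] := range_subtree xS; lia.
- by rewrite !glue_B //; have [] := range_rest xR; lia.
Qed.

Lemma glue_interval x y : x \in U -> y \in U ->
  ((y == x) || (x \in ap y)) = (pre x <= pre y < pre x + sz x).
Proof.
move=> xU yU; have sz_gt0 := glue_sz_gt0 xU; apply/idP/idP.
  case/predU1P => [-> | xy]; first by rewrite leqnn -{1}[pre x]addn0 ltn_add2l.
  case/orP: (glue_mem_ap yU xU xy) => /andP [yS].
    case/predU1P => [-> | xS]; last first.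
      by move: xy; rewrite !glue_A // => xy; rewrite -(dfs_interval A) // xy orbT.
    by rewrite !glue_u glue_A //; have [] := range_subtree yS; have := dfs_sz_gt0 A yS; lia.
  by move=> xR; move: xy; rewrite !glue_B // => xy; rewrite -(dfs_interval B) // xy orbT.
have cardU := card_step; have cardS := card_reach_in.
case: (step_cases xU) => [-> | xS | xR]; case: (step_cases yU) => [-> | yS | yR];
  rewrite ?glue_u ?(glue_A _ _ _ xS) ?(glue_A _ _ _ yS) ?(glue_B _ _ _ xR) ?(glue_B _ _ _ yR).
- by rewrite eqxx.
- by have [s -> _] := ap_subtree yS; rewrite mem_cat mem_head !orbT.
- by have [] := range_rest yR; lia.
- by have [] := range_subtree xS; lia.
- by rewrite (dfs_interval A).
- by have [] := range_subtree xS; have [] := range_rest yR; lia.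
- by have [] := range_rest xR; lia.
- by have [] := range_subtree yS; have [] := range_rest xR; have := dfs_sz_gt0 A yS; lia.
- by rewrite (dfs_interval B).
Qed.

Lemma glue_arc x y : x \in U -> y \in U -> e x y -> pre x < pre y -> x \in ap y.
Proof.
move=> xU yU exy; have in_S : x \in S -> y \in S.
  by move=> xS; apply: reach_in_closed xS _; rewrite /arc_into /= yU exy.
have cardS := card_reach_in.
case: (step_cases xU) => [xE | xS | xR]; case: (step_cases yU) => [yE | yS | yR];
  rewrite ?xE ?yE ?glue_u ?(glue_A _ _ _ xS) ?(glue_A _ _ _ yS)
    ?(glue_B _ _ _ xR) ?(glue_B _ _ _ yR).
- by rewrite ltnn.
- by have [s -> _] := ap_subtree yS; rewrite mem_cat mem_head orbT.
- by move: yR; rewrite in_setD in_S ?xE ?reach_in_self.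
- by move=> lt; have [+ _] := range_subtree xS; rewrite ltnNge (ltnW lt).
- exact: (dfs_arc A).
- by move: yR; rewrite in_setD in_S //; case/setD1P: xS.
- by move=> lt; have [+ _] := range_rest xR; rewrite leqNgt ltn_addr.
- move=> lt; have [le1 _] := range_rest xR; have [_ le2] := range_subtree yS.
  by have := leq_trans (leq_trans (leq_trans lt (leq_addr _ _)) le2) le1; rewrite ltnn.
- exact: (dfs_arc B).
Qed.

Lemma dfs_forest_glue : dfs_forest U pi o ap pre sz.
Proof.
split; [exact: glue_stack | exact: glue_uniq | exact: glue_sorted
  | exact: glue_ap_take | exact: glue_interval | exact: glue_pre_ge
  | exact: glue_end_le | exact: glue_arc].
Qed.

End Step.

Lemma dfs_forest_exists U pi o :
  dfs_state U pi -> exists ap pre sz, dfs_forest U pi o ap pre sz.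
Proof.
suff IH n : forall (U : {set V}) pi o, #|U| <= n -> dfs_state U pi ->
    exists ap pre sz, dfs_forest U pi o ap pre sz by exact: IH.
elim: n => [|n IHn] {}U {}pi {}o cardU state; have [-> | [x xU]] := set_0Vmem U;
  try by exists (fun=> pi), (fun=> 0), (fun=> 0); exact: dfs_forest0.
  by move: cardU; rewrite leqn0 => /eqP/cards0_eq U0; rewrite U0 inE in xU.
case: (state) => _ _ _ /(_ x xU) [u /andP [uU pi_u] _].
have cardS := card_reach_in uU; have cardUSR := card_step U u.
have cardS' : #|reach_in U u :\ u| <= n by lia.
have cardR : #|U :\: reach_in U u| <= n by lia.
have [apA [preA [szA A]]] := IHn _ _ o.+1 cardS' (dfs_state_subtree state uU pi_u).
have [apB [preB [szB B]]] := IHn _ _ (o + #|reach_in U u|) cardR (dfs_state_rest u state).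
by do 3 eexists; exact: dfs_forest_glue A B.
Qed.

End DepthFirstSearch.

(** * The DAG-decomposition of a depth-first search forest *)

Section DfsDecomposition.
Variables (V : finType) (e : rel V) (ap : V -> seq V) (pre sz : V -> nat).
Hypothesis dfs : dfs_forest e [set: V] [::] 0 ap pre sz.

Definition ancestor x y := (y == x) || (x \in ap y).

Lemma ap_uniq y : uniq (rcons (ap y) y).
Proof. by apply: (dfs_uniq dfs); rewrite inE. Qed.

Lemma ap_sorted y : sorted e (rcons (ap y) y).
Proof. by apply: (dfs_sorted dfs); rewrite inE. Qed.

Lemma ap_take y a : a \in ap y -> ap a = take (index a (ap y)) (ap y).
Proof. by apply: (dfs_ap_take dfs); rewrite inE. Qed.

Lemma ancestorE x y : ancestor x y = (pre x <= pre y < pre x + sz x).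
Proof. by apply: (dfs_interval dfs); rewrite inE. Qed.

Lemma arc_forward x y : e x y -> pre x < pre y -> x \in ap y.
Proof. by apply: (dfs_arc dfs); rewrite inE. Qed.

Lemma ap_irr y : y \notin ap y.
Proof. by have := ap_uniq y; rewrite rcons_uniq => /andP []. Qed.

Lemma ap_trans x y z : x \in ap y -> y \in ap z -> x \in ap z.
Proof. by move=> xy /ap_take zy; move: xy; rewrite zy => /mem_take. Qed.

Lemma ancestor_trans x y z : ancestor x y -> ancestor y z -> ancestor x z.
Proof.
rewrite /ancestor => /predU1P [-> // | xy] /predU1P [-> | yz]; first by rewrite xy orbT.
by rewrite (ap_trans xy yz) orbT.
Qed.

Lemma ancestor_ap x y : ancestor x y -> x \notin ap y -> x = y.
Proof. by case/predU1P => [-> // | ->]. Qed.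

Lemma ap_split y a : a \in ap y -> ap y = ap a ++ a :: drop (index a (ap y)).+1 (ap y).
Proof.
move=> ay; rewrite (ap_take ay) -{1}(cat_take_drop (index a (ap y)) (ap y)).
by rewrite (drop_nth a) ?index_mem // nth_index.
Qed.

Definition arc_off y : rel V := [rel a b | e a b && (b \notin ap y)].

Definition reach y := [set z | connect (arc_off y) y z].

Definition exits y := [set a | (a \notin reach y) && [exists w in reach y, e w a]].

Definition bag y := y |: exits y.

Lemma reach_self y : y \in reach y.
Proof. by rewrite inE connect0. Qed.

Lemma reach_notin_ap y z : z \in reach y -> z \notin ap y.
Proof.
rewrite inE; apply: (connect_stable (P := fun z => z \notin ap y) (ap_irr y)).
by move=> a b _ /andP [].
Qed.

Lemma reach_pre_lt y z : z \in reach y -> pre z < pre y + sz y.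
Proof.
(* A forward arc [a -> b] lands in the subtree of [a], which ends before the
   subtree of [y] does unless [a] is an ancestor of [y]. *)
rewrite inE => yz; have /andP [//] : (pre z < pre y + sz y) && (z \notin ap y).
apply: (connect_stable (P := fun z => (pre z < pre y + sz y) && (z \notin ap y)) _ _ yz).
  by have := ancestorE y y; rewrite /ancestor eqxx => /esym/andP [_ ->]; rewrite ap_irr.
move=> a b /andP [a_lt na] /andP [eab nb]; rewrite nb andbT.
have [ba | ab] := leqP (pre b) (pre a); first exact: leq_ltn_trans ba a_lt.
have ab_anc : ancestor a b by rewrite /ancestor (arc_forward eab ab) orbT.
have [ya | ay] := leqP (pre y) (pre a).
  have ya_anc : ancestor y a by rewrite ancestorE ya a_lt.
  by have := ancestor_trans ya_anc ab_anc; rewrite ancestorE => /andP [].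
move: ab_anc; rewrite ancestorE => /andP [_ b_lt]; rewrite ltnNge; apply/negP => yb.
have : ancestor a y by rewrite ancestorE (ltnW ay); lia.
by case/predU1P => [ya | a_ap]; [rewrite ya ltnn in ay | rewrite a_ap in na].
Qed.

Lemma reach_step y a b : a \in reach y -> e a b -> b \notin ap y -> b \in reach y.
Proof.
by rewrite !inE => ya eab nb; apply: connect_trans ya (connect1 _); rewrite /arc_off /= eab.
Qed.

Lemma reach2_notin_ap y w z : w \in reach y -> z \in reach w -> z \notin ap y.
Proof.
move=> wR zR; apply/negP => zy.
have zw := reach_notin_ap zR; have z_lt := reach_pre_lt zR.
have wy := reach_notin_ap wR; have w_lt := reach_pre_lt wR.
have zy_anc : ancestor z y by rewrite /ancestor zy orbT.
have [wz | zw'] := leqP (pre w) (pre z).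
  have : ancestor w z by rewrite ancestorE wz z_lt.
  case/predU1P => [ezw | wz']; first by rewrite -ezw zy in wy.
  by rewrite (ap_trans wz' zy) in wy.
have : ancestor z w.
  have [wy' | yw] := ltnP (pre w) (pre y).
    by move: zy_anc; rewrite !ancestorE => /andP [_ ?]; rewrite (ltnW zw'); lia.
  by apply: ancestor_trans zy_anc _; rewrite ancestorE yw w_lt.
by case/predU1P => [ewz | zw'']; [rewrite ewz ltnn in zw' | rewrite zw'' in zw].
Qed.

Lemma reach_trans y w z : w \in reach y -> z \in reach w -> z \in reach y.
Proof.
move=> wR; rewrite [z \in reach w]inE => wz.
have /andP [//] : (z \in reach y) && (z \in reach w).
apply: (connect_stable (P := fun z => (z \in reach y) && (z \in reach w)) _ _ wz).
  by rewrite wR reach_self.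
move=> a b /andP [aRy aRw] /andP [eab nb].
have bRw := reach_step aRw eab nb.
by rewrite bRw (reach_step aRy eab (reach2_notin_ap wR bRw)).
Qed.

Lemma reach_anti x y : x \in reach y -> y \in reach x -> x = y.
Proof.
move=> xR yR; have xn := reach_notin_ap xR; have yn := reach_notin_ap yR.
have [xy | yx] := leqP (pre x) (pre y).
  by apply: (ancestor_ap _ xn); rewrite ancestorE xy (reach_pre_lt yR).
by apply/esym/(ancestor_ap _ yn); rewrite ancestorE (ltnW yx) (reach_pre_lt xR).
Qed.

Lemma path_arc_off y x p :
  path e x p -> all [pred b | b \notin ap y] (x :: p) -> path (arc_off y) x p.
Proof.
by move=> pth off; apply: (sub_in_path _ off pth) => a b _ nb eab; rewrite /arc_off /= eab.
Qed.

Lemma ap_reach a y : a \in ap y -> y \in reach a.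
Proof.
move=> ay; have := ap_uniq y; have := ap_sorted y; rewrite (ap_split ay).
set s := drop _ _; rewrite rcons_cat sorted_cat_cons => /andP [_ pth].
rewrite cat_uniq => /and3P [_ disj _].
rewrite inE; apply/connectP; exists (rcons s y); last by rewrite last_rcons.
apply: path_arc_off pth _; apply/allP => b bs.
by apply/negP => ba; move/hasPn: disj => /(_ b bs); rewrite ba.
Qed.

Definition reach_rel : rel V := fun x y => y \in reach x.

Lemma reach_rel_refl : reflexive reach_rel.
Proof. exact: reach_self. Qed.

Lemma reach_rel_trans : transitive reach_rel.
Proof. by move=> w y z; apply: reach_trans. Qed.

Lemma reach_rel_anti : antisymmetric reach_rel.
Proof. by move=> x y /andP [yx xy]; apply: reach_anti. Qed.

Local Notation dag := (hasse reach_rel).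

Lemma connect_dag : connect dag =2 reach_rel.
Proof. exact: connect_hasse reach_rel_refl reach_rel_trans reach_rel_anti. Qed.

Lemma reach_arc y w a : w \in reach y -> e w a -> a \in reach y :|: exits y.
Proof.
move=> wR ewa; rewrite in_setU; case aR: (a \in reach y) => //=.
by rewrite inE aR; apply/existsP; exists w; rewrite wR.
Qed.

Lemma exits_notin_reach y a : a \in exits y -> a \notin reach y.
Proof. by rewrite inE => /andP []. Qed.

Lemma exits_ap y a : a \in exits y -> a \in ap y.
Proof.
rewrite inE => /andP [aR /existsP [w /andP [wR ewa]]].
by apply: contraNT aR; apply: reach_step wR ewa.
Qed.

Lemma reach_exits_sub y k : k \in reach y -> reach k :|: exits k \subset reach y :|: exits y.
Proof.
move=> kR; apply/subsetP => v /setUP [vR | ].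
  by rewrite in_setU (reach_trans kR vR).
rewrite inE => /andP [_ /existsP [w /andP [wR ewv]]].
exact: reach_arc (reach_trans kR wR) ewv.
Qed.

Lemma bag_sub y : bag y \subset reach y :|: exits y.
Proof. by apply/subsetP => v /setU1P [-> | vE]; rewrite in_setU ?reach_self ?vE ?orbT. Qed.

Lemma Xsucc_dag y : Xsucc dag bag y = reach y :|: exits y.
Proof.
apply/eqP; rewrite eqEsubset; apply/andP; split.
  apply/bigcupsP => k; rewrite /preceq connect_dag => kR.
  exact: subset_trans (bag_sub k) (reach_exits_sub kR).
apply/subsetP => v /setUP [vR | vE]; apply/bigcupP.
  by exists v; rewrite /preceq ?connect_dag //; exact: setU11.
by exists y; rewrite /preceq ?connect0 //; exact: setU1r.
Qed.

Lemma bag_interpolation i j k :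
  preceq dag i j -> preceq dag j k -> bag i :&: bag k \subset bag j.
Proof.
rewrite /preceq !connect_dag => jR kR; apply/subsetP => v /setIP [vi vk].
have := subsetP (subset_trans (bag_sub k) (reach_exits_sub kR)) v vk.
case/setUP => [vR | vE]; last exact: setU1r.
case/setU1P: vi => [vE | vi]; first by rewrite vE (reach_anti jR) -?vE //; exact: setU11.
by have := exits_notin_reach vi; rewrite (reach_trans jR vR).
Qed.

Lemma guards_dag_arc x y :
  dag x y -> guards e (Xsucc dag bag y :\: bag x) (bag x :&: bag y).
Proof.
case/and3P => nxy yR /forallP minimal; rewrite Xsucc_dag; split.
  rewrite disjoints_subset; apply/subsetP => v /setDP [_ vx].
  by rewrite in_setC in_setI (negbTE vx).
move=> u v /setDP [uW ux] euv; rewrite in_setU in_setD in_setI.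
have notin_bag_x z : z \in reach y -> z \notin bag x.
  move=> zR; apply/setU1P => -[zx | zE].
    by rewrite zx in zR; rewrite (reach_anti zR yR) eqxx in nxy.
  by have := exits_notin_reach zE; rewrite (reach_trans yR zR).
case/setUP: uW => [uR | uE].
  case/setUP: (reach_arc uR euv) => [vR | vE]; first by rewrite notin_bag_x // in_setU vR.
  by case: (v \in bag x); rewrite //= ?in_setU ?vE ?orbT ?setU1r.
(* An exit [u] of [y] would lie strictly between [x] and [y], or exit [x]. *)
exfalso; have yRu := ap_reach (exits_ap uE).
have [uRx | nuRx] := boolP (u \in reach x).
  have := minimal u; rewrite /reach_rel uRx yRu !andbT => /negP; apply; apply/andP; split.
    by apply: contraNneq ux => <-; exact: setU11.
  by apply: contraTneq (exits_notin_reach uE) => ->; rewrite reach_self.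
have := subsetP (reach_exits_sub yR) u; rewrite in_setU uE orbT in_setU (negbTE nuRx).
by move=> /(_ isT) uEx; rewrite setU1r in ux.
Qed.

Lemma exits_root r : is_root dag r -> exits r = set0.
Proof.
move=> root; apply/setP => a; rewrite in_set0; apply/negP => aE.
have ar := hasse_root_minimal reach_rel_refl reach_rel_trans reach_rel_anti root
  (ap_reach (exits_ap aE)).
by have := exits_notin_reach aE; rewrite ar reach_self.
Qed.

Lemma guards_dag_root r : is_root dag r -> guards e (Xsucc dag bag r) set0.
Proof.
move=> root; rewrite Xsucc_dag exits_root // !setU0; split.
  by rewrite disjoints_subset setC0 subsetT.
by move=> u v uR euv; have := reach_arc uR euv; rewrite exits_root // !setU0.
Qed.

Lemma dfs_dag_decomposition : is_dag_decomposition e dag bag.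
Proof.
split.
- exact: hasse_dag reach_rel_refl reach_rel_trans reach_rel_anti.
- by apply/setP => v; rewrite inE; apply/bigcupP; exists v => //; exact: setU11.
- exact: bag_interpolation.
- exact: guards_dag_arc.
- exact: guards_dag_root.
Qed.

Lemma bag_subset_cycle y : exits y != set0 ->
  exists2 c : seq V, uniq c && cycle e c & {subset bag y <= c}.
Proof.
case/set0Pn => a0 a0E; have hasE : has [in exits y] (ap y).
  by apply/hasP; exists a0; rewrite ?exits_ap.
move: (ap_uniq y) (ap_sorted y) (ap_irr y) (@exits_ap y) (@reach_notin_ap y).
case: (split_find hasE) => a s1 s2 aE noE1.
rewrite !rcons_cat !cat_rcons cat_uniq sorted_cat_cons => /and3P [_ _ u2] /andP [_ pth2].
move=> _ apE offR.
move: (aE); rewrite inE => /andP [_ /existsP [w /andP [wR ewa]]].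
move: wR; rewrite inE => /connectP [p0 /shortenP [p pth up _] wE {p0}].
have p_off z : z \in p -> z \notin a :: s2.
  move=> zp; have zR : z \in reach y by rewrite inE (path_connect pth) // in_cons zp orbT.
  by apply: contraNN (offR z zR); rewrite mem_cat => ->; rewrite orbT.
exists (a :: s2 ++ y :: p).
  apply/andP; split.
    move: u2; rewrite -[a :: rcons s2 y]/(rcons (a :: s2) y) rcons_uniq => /andP [ya2 u2].
    rewrite -cat_cons cat_uniq u2 up andbT; apply/hasPn => z.
    by rewrite in_cons => /predU1P [-> // | /p_off].
  rewrite /= rcons_cat cat_path /= rcons_path -wE ewa andbT.
  move: pth2; rewrite rcons_path => /andP [-> ->] /=.
  by apply: sub_path pth => u v /andP [].
move=> b /setU1P [-> | bE]; first by rewrite in_cons mem_cat mem_head !orbT.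
move: (apE b bE); rewrite mem_cat => /orP [bs1 | ]; last by rewrite -cat_cons mem_cat => ->.
by case/hasP: noE1; exists b.
Qed.

Lemma card_bag_le_circ y : #|bag y| <= circ e.
Proof.
have [E0 | /bag_subset_cycle [c /andP [uc cc] sub]] := eqVneq (exits y) set0.
  by rewrite /bag E0 setU0 cards1 circ_gt0.
apply: leq_trans (size_cycle_le_circ uc cc).
by rewrite -(card_uniqP uc); apply/subset_leq_card/subsetP.
Qed.

End DfsDecomposition.

Theorem mainTheorem2 (V : finType) (e : rel V) :
  simple_digraph e -> dgw_le e (circ e + 1).
Proof.
move=> _.
have [ap [pre [sz dfs]]] : exists ap pre sz, dfs_forest e [set: V] [::] 0 ap pre sz.
  by apply: dfs_forest_exists; split => // x _; exists x; rewrite ?inE ?connect0.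
exists V, (hasse (reach_rel e ap)), (bag e ap).
split; first exact: dfs_dag_decomposition dfs.
by apply/bigmax_leqP => y _; apply: leq_trans (card_bag_le_circ dfs y) (leq_addr 1 _).
Qed.
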